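(* Let $k\ge 2$ and $n\ge 1$ be integers and let $1\le M\le kn-1$. Then the probability of selecting an item of highest rank (rank $n$) using the strategy $\mathcal{S}(n,k;M)$ is \[ P_{n,k}(\mathcal{S}(n,k;M))=\sum_{l=1}^{k-1}\frac{\binom Ml(k)_l\,(k(n-1))_{M-l}}{(kn)_M} +k\sum_{j=1}^{n-1}\sum_{l=1}^k \frac{\binom Ml(k)_l\,(k(j-1))_{M-l}}{(kn)_M}\cdot\frac 1{k(n-j+1)-l}. \]
   Context: Fix integers $k\ge2$, $n\ge1$. There are $kn$ items, $k$ items at each of the ranks $1,2,\dots,n$ (rank $n$ is highest). The items are revealed one at a time in a uniformly random order, i.e. the sequence of ranks is a uniformly random permutation of the multiset $\{1^k,2^k,\dots,n^k\}$ (each number in $\{1,\dots,n\}$ repeated $k$ times); $P_{n,k}$ denotes this uniform probability. For $M\in\{1,\dots,kn-1\}$, the strategy $\mathcal{S}(n,k;M)$ lets the first $M$ items pass and then selects the first later-arriving item whose rank is greater than or equal to the highest rank among the first $M$ items (if such an item exists; otherwise nothing is selected). $P_{n,k}(\mathcal{S}(n,k;M))$ denotes the probability that this strategy selects an item of rank $n$. Notation: $(b)_a=b(b-1)\cdots(b-a+1)$ is the falling factorial for nonnegative integers $a,b$, with $(b)_0=1$ (so $(b)_a=0$ if $a>b$). *)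

From mathcomp Require Import all_boot all_order all_algebra.
Set Implicit Arguments. Unset Strict Implicit. Unset Printing Implicit Defensive.
Import Order.TTheory GRing.Theory Num.Theory.

Definition rank_multiset (n k : nat) : seq nat :=
  flatten [seq nseq k r | r <- iota 1 n].

(* All distinct arrangements of the multiset; the uniform probability P_{n,k}
   is the uniform distribution on this (duplicate-free) list. *)
Definition arrangements (n k : nat) : seq (seq nat) :=
  permutations (rank_multiset n k).

Definition strategy_select (M : nat) (s : seq nat) : option nat :=
  let m := \max_(x <- take M s) x in
  let r := drop M s in
  if has (fun x => m <= x) r then Some (nth 0 r (find (fun x => m <= x) r))
  else None.

Definition success_prob (n k M : nat) : rat :=
  ((count (fun s => strategy_select M s == Some n) (arrangements n k))%:R /
   (size (arrangements n k))%:R)%R.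

(* (b)_a falling factorial = b ^_ a (mathcomp's ffact). *)

From mathcomp Require Import all_boot all_order all_algebra.
From mathcomp Require Import zify ring.
Import Order.TTheory GRing.Theory Num.Theory.
Set Implicit Arguments. Unset Strict Implicit. Unset Printing Implicit Defensive.

(* Condition on the first M items.  If their maximal rank is j and it occurs l
   times among them, then the items still to come with rank >= j number
   k(n-j+1) - l, each equally likely to be the first of them to arrive, and
   k - [j = n] l of them have rank n.  The event "maximum j with multiplicity l"
   has the hypergeometric probability C(M,l) (k)_l (k(j-1))_(M-l) / (kn)_M;
   summing over j and l gives the formula, the terms j = n forming the first
   sum.  The uniform law on the arrangements of a multiset is handled through
   its first item: it equals x with probability (multiplicity of x)/(size), and
   the remaining items are then uniform on the arrangements of the rest. *)

Lemma count_rank_multiset (P : pred nat) n k :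
  count P (rank_multiset n k) = k * count P (iota 1 n).
Proof.
rewrite /rank_multiset count_flatten -map_comp.
elim: (iota 1 n) => [|r s IH] /=; first by rewrite muln0.
by rewrite IH count_nseq mulnDr mulnC.
Qed.

Lemma size_rank_multiset n k : size (rank_multiset n k) = k * n.
Proof. by rewrite -count_predT count_rank_multiset count_predT size_iota. Qed.

Lemma count_mem_rank_multiset n k r :
  count_mem r (rank_multiset n k) = k * (0 < r <= n).
Proof. by rewrite count_rank_multiset count_uniq_mem ?iota_uniq // mem_iota add1n. Qed.

Lemma mem_rank_multiset n k r : r \in rank_multiset n k -> 0 < r <= n.
Proof. by rewrite -has_pred1 has_count count_mem_rank_multiset; case: (_ && _); rewrite ?muln0. Qed.

Lemma count_rank_multiset_lt n k j : 0 < j <= n.+1 ->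
  count (fun x => x < j) (rank_multiset n k) = k * j.-1.
Proof.
case: j => // j /= jn; rewrite count_rank_multiset -size_filter.
by rewrite -add1n (filter_iota_ltn 1) ?size_iota.
Qed.

Lemma count_rank_multiset_ge n k j : 0 < j <= n ->
  count (fun x => j <= x) (rank_multiset n k) = k * (n - j + 1).
Proof.
move=> hj; have := count_predC (fun x => x < j) (rank_multiset n k).
rewrite size_rank_multiset count_rank_multiset_lt; last by lia.
rewrite (eq_count (a2 := fun x => j <= x)) => [|x /=]; last by rewrite -leqNgt.
move=> e; apply/eqP; rewrite -(eqn_add2l (k * j.-1)) e -mulnDr; apply/eqP.
congr (_ * _); lia.
Qed.

Section Arrangements.
Variable T : eqType.
Implicit Types (u : seq T) (x : T).

Definition narr u := size (permutations u).

Lemma narr_gt0 u : 0 < narr u.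
Proof.
have : u \in permutations u by rewrite mem_permutations.
by rewrite /narr; case: (permutations u).
Qed.

Lemma narr_undup_rem u : 0 < size u -> narr u = \sum_(x <- undup u) narr (rem x u).
Proof.
by move=> u_gt0; rewrite /narr (perm_size (permutationsE u_gt0)) size_allpairs_dep sumnE big_map.
Qed.

Lemma sum_undup_count_mem u : \sum_(x <- undup u) count_mem x u = size u.
Proof.
rewrite -[RHS](perm_size (perm_count_undup u)) size_flatten /shape sumnE !big_map.
by apply: eq_bigr => x _; rewrite size_nseq.
Qed.

Lemma prod_fact_count_mem_rem (S : seq T) u x : uniq S -> x \in S -> x \in u ->
  \prod_(y <- S) (count_mem y u)`! =
  count_mem x u * \prod_(y <- S) (count_mem y (rem x u))`!.
Proof.
move=> S_uniq xS xu; rewrite !(bigD1_seq x xS S_uniq) /= mulnA; congr (_ * _).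
  have : 0 < count_mem x u by rewrite -has_count has_pred1.
  by rewrite count_rem xu /= eqxx; case: (count_mem x u) => // c _; rewrite subn1 factS.
by apply: eq_bigr => y /negPf yx; rewrite count_rem /= eq_sym yx andbF subn0.
Qed.

Lemma narr_mul_prod_fact (S : seq T) u : uniq S -> {subset u <= S} ->
  narr u * \prod_(y <- S) (count_mem y u)`! = (size u)`!.
Proof.
move=> S_uniq; move Dm: (size u) => m; elim: m u Dm => [|m IH] u Dm uS.
  by case: u Dm uS => // _ _; rewrite /narr /= mul1n big1.
rewrite narr_undup_rem ?Dm // big_distrl /=.
transitivity (\sum_(x <- undup u) count_mem x u * m`!).
  apply: eq_big_seq => x; rewrite mem_undup => xu.
  rewrite (prod_fact_count_mem_rem S_uniq (uS x xu) xu) mulnCA IH ?size_rem ?Dm //.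
  by move=> y /mem_rem; apply: uS.
by rewrite -big_distrl /= sum_undup_count_mem Dm factS mulnC.
Qed.

Lemma count_mem_mul_narr u x : x \in u ->
  count_mem x u * narr u = size u * narr (rem x u).
Proof.
move=> xu; have [S_uniq xS] : uniq (undup u) /\ x \in undup u.
  by rewrite undup_uniq mem_undup.
have sub_u : {subset u <= undup u} by move=> y; rewrite mem_undup.
have sub_rem : {subset rem x u <= undup u} by move=> y /mem_rem; apply: sub_u.
have := narr_mul_prod_fact S_uniq sub_u.
rewrite (prod_fact_count_mem_rem S_uniq xS xu).
have := narr_mul_prod_fact S_uniq sub_rem.
set P := \prod_(y <- _) _ => Erem Eu.
have P_gt0 : 0 < P by apply: prodn_gt0 => y; rewrite fact_gt0.
have u_gt0 : 0 < size u by case: (u) xu.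
apply/eqP; rewrite -(eqn_pmul2r P_gt0) (mulnC (count_mem x u)) -mulnA Eu -mulnA Erem size_rem //.
by case: (size u) u_gt0 => // m _; rewrite factS.
Qed.

End Arrangements.

(* The number of ways to fill M ordered slots with l of a given items and
   M - l of b other ones. *)
Definition hypergeom M l a b := 'C(M, l) * a ^_ l * b ^_ (M - l).

Lemma hypergeomS M l a b :
  a * ((l != 0) * hypergeom M l.-1 a.-1 b) + b * hypergeom M l a b.-1 =
  hypergeom M.+1 l a b.
Proof.
rewrite /hypergeom; case: l => [|l] /=.
  by rewrite !bin0 !ffactn0 !subn0 muln0 add0n ffactnS !mul1n.
rewrite mul1n binS subSS ffactnS; case: (ltnP l M) => lM.
  have -> : M - l = (M - l.+1).+1 by lia.
  rewrite ffactnS.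
  move: 'C(M, l) 'C(M, l.+1) (a.-1 ^_ l) (b.-1 ^_ (M - l.+1)) => c1 c2 x y; ring.
rewrite (@bin_small M l.+1) ?ltnS //.
move: 'C(M, l) (a.-1 ^_ l) (b.-1 ^_ (M - l.+1)) (b ^_ (M - l)) => c1 x y z; ring.
Qed.

Local Open Scope ring_scope.

Section Averages.
Variables (T : eqType) (R : numFieldType).
Implicit Types (u v : seq T) (f g : seq T -> R).

Lemma sumr_nat_of_bool (I : Type) (s : seq I) (P : pred I) :
  \sum_(i <- s) (P i)%:R = (count P s)%:R :> R.
Proof. by elim: s => [|i s IH]; rewrite ?big_nil // big_cons IH /= natrD. Qed.

Lemma sumr_undup_count_mem u (F : T -> R) :
  \sum_(x <- undup u) F x *+ count_mem x u = \sum_(x <- u) F x.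
Proof.
rewrite -[RHS]big_undup_iterop_count; apply: eq_bigr => x _.
by rewrite Monoid.iteropE iter_addr_0.
Qed.

Definition avg u f : R := (\sum_(s <- permutations u) f s) / (narr u)%:R.

Lemma narr_neq0 u : (narr u)%:R != 0 :> R.
Proof. by rewrite pnatr_eq0 -lt0n narr_gt0. Qed.

Lemma eq_avg u f g : {in permutations u, f =1 g} -> avg u f = avg u g.
Proof. by move=> fg; rewrite /avg (eq_big_seq _ fg). Qed.

Lemma avg_const u c : avg u (fun=> c) = c.
Proof.
by rewrite /avg big_const_seq count_predT iter_addr_0 -[c *+ _]mulr_natr mulfK ?narr_neq0.
Qed.

Lemma avg_sum (I : Type) (r : seq I) u (F : I -> seq T -> R) :
  avg u (fun s => \sum_(i <- r) F i s) = \sum_(i <- r) avg u (F i).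
Proof. by rewrite /avg exchange_big mulr_suml. Qed.

Lemma avgZ u c f : avg u (fun s => c * f s) = c * avg u f.
Proof. by rewrite /avg -big_distrr mulrA. Qed.

Lemma avg_nil f : avg [::] f = f [::].
Proof. by rewrite /avg /narr /= big_seq1 divr1. Qed.

Lemma avg_cons u f : (0 < size u)%N ->
  avg u f = (size u)%:R^-1 * \sum_(x <- u) avg (rem x u) (fun t => f (x :: t)).
Proof.
move=> u_gt0; rewrite /avg (perm_big _ (permutationsE u_gt0)) big_allpairs_dep /=.
rewrite mulr_sumr -[in RHS]sumr_undup_count_mem mulr_suml; apply: eq_big_seq => x.
rewrite mem_undup => xu; rewrite -[_ *+ count_mem x u]mulr_natr.
have Enarr := count_mem_mul_narr xu.
have size_neq0 : (size u)%:R != 0 :> R by rewrite pnatr_eq0 -lt0n.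
have count_mem_E : (count_mem x u)%:R = (size u)%:R * (narr (rem x u))%:R / (narr u)%:R :> R.
  by rewrite -natrM -Enarr natrM mulfK ?narr_neq0.
rewrite count_mem_E; field.
by rewrite size_neq0 !narr_neq0.
Qed.

Lemma avg_prefix M u (f : seq T -> seq T -> R) (phi : seq T -> R) :
  (M <= size u)%N ->
  (forall a v, perm_eq (a ++ v) u -> size a = M -> avg v (f a) = phi a) ->
  avg u (fun s => f (take M s) (drop M s)) = avg u (fun s => phi (take M s)).
Proof.
elim: M u f phi => [|M IH] u f phi M_le cond_avg.
  transitivity (avg u (f [::])); first by apply: eq_avg => s _; rewrite take0 drop0.
  rewrite (cond_avg [::] u) // -(avg_const u (phi [::])).
  by apply: eq_avg => s _; rewrite take0.
have u_gt0 : (0 < size u)%N by case: (size u) M_le.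
rewrite !(avg_cons _ u_gt0); congr (_ * _); apply: eq_big_seq => x xu /=.
apply: (IH _ (fun a => f (x :: a)) (fun a => phi (x :: a))).
  by rewrite size_rem //; case: (size u) M_le.
move=> a v av_perm a_size; apply: cond_avg; last by rewrite /= a_size.
by rewrite -(perm_cons x) in av_perm; apply: perm_trans av_perm _; rewrite perm_sym perm_to_rem.
Qed.

(* When no item satisfies S both sides are 0, the right one as 0 / 0. *)
Lemma avg_first_hit (S Q : pred T) x0 v :
  avg v (fun s => (has S s && Q (nth x0 s (find S s)))%:R) =
  (count (predI S Q) v)%:R / (count S v)%:R :> R.
Proof.
move Dm: (size v) => m; elim: m v Dm => [|m IH] v Dm.
  by case: v Dm => // _; rewrite avg_nil /= mul0r.
set hit := fun s => _; set r := _ / _.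
have v_gt0 : (0 < size v)%N by rewrite Dm.
have step x : x \in v ->
    avg (rem x v) (fun t => hit (x :: t)) = (S x && Q x)%:R + (~~ S x)%:R * r.
  move=> xv; case Sx: (S x); rewrite /= ?mul0r ?addr0 ?mul1r ?add0r.
    by rewrite -[RHS](avg_const (rem x v)); apply: eq_avg => t _; rewrite /hit /= Sx.
  transitivity (avg (rem x v) hit); first by apply: eq_avg => t _; rewrite /hit /= Sx.
  by rewrite IH ?size_rem ?Dm // /r !count_rem xv /= Sx !subn0.
rewrite avg_cons // (eq_big_seq _ step) big_split /= -mulr_suml !sumr_nat_of_bool.
have [CS0|CS_gt0] := posnP (count S v).
  have : (count (predI S Q) v <= count S v)%N by apply: sub_count => x /andP[].
  by rewrite /r CS0 leqn0 => /eqP ->; rewrite !mul0r mulr0 add0r mulr0.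
have CS_neq0 : (count S v)%:R != 0 :> R by rewrite pnatr_eq0 -lt0n.
have size_neq0 : (size v)%:R != 0 :> R by rewrite pnatr_eq0 -lt0n.
rewrite -(count_predC S v) natrD in size_neq0 *.
by rewrite /r; field; rewrite CS_neq0 size_neq0.
Qed.

Lemma avg_andb u c (P : pred (seq T)) :
  avg u (fun s => (c && P s)%:R) = c%:R * avg u (fun s => (P s)%:R).
Proof. by rewrite -avgZ; apply: eq_avg => s _; rewrite -mulnb natrM. Qed.

Lemma prefix_count_cons (A C : pred T) M l x t : (A x -> ~~ C x) ->
  (count A (take M.+1 (x :: t)) == l) && (count C (take M.+1 (x :: t)) == 0%N) =
  if A x then (l != 0%N) && ((count A (take M t) == l.-1) && (count C (take M t) == 0%N))
  else ~~ C x && ((count A (take M t) == l) && (count C (take M t) == 0%N)).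
Proof.
move=> AC_x /=; case Ax: (A x) => /=.
  by rewrite (negbTE (AC_x Ax)); case: l => [|l]; rewrite ?add1n.
by case: (C x); rewrite /= ?add1n ?add0n ?andbF.
Qed.

Lemma avg_prefix_count M (A C : pred T) l u :
  (forall x, A x -> ~~ C x) -> (M <= size u)%N ->
  avg u (fun s => ((count A (take M s) == l) && (count C (take M s) == 0%N))%:R) =
  (hypergeom M l (count A u) (count (predC (predU A C)) u))%:R / ((size u) ^_ M)%:R :> R.
Proof.
move=> AC; elim: M u l => [|M IH] u l M_le.
  transitivity (avg u (fun=> (0%N == l)%:R : R)).
    by apply: eq_avg => s _; rewrite take0 /= andbT.
  by rewrite avg_const /hypergeom; case: l => [|l]; rewrite ?bin0 ?bin0n /= ?mul0n ?mul0r ?divr1.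
have u_gt0 : (0 < size u)%N by case: (size u) M_le.
set B := predC (predU A C); set a := count A u; set b := count B u; set m := size u.
set D : R := ((m.-1) ^_ M)%:R.
set X : R := ((l != 0%N) * hypergeom M l.-1 a.-1 b)%:R / D.
set Y : R := (hypergeom M l a b.-1)%:R / D.
have step x : x \in u -> avg (rem x u) (fun t =>
      ((count A (take M.+1 (x :: t)) == l) && (count C (take M.+1 (x :: t)) == 0%N))%:R) =
    (A x)%:R * X + (B x)%:R * Y.
  move=> xu; have size_rem_u : size (rem x u) = m.-1 by rewrite size_rem.
  have M_le' : (M <= size (rem x u))%N by rewrite size_rem_u; lia.
  under eq_avg => t _ do rewrite (prefix_count_cons M l t (AC x)).
  rewrite /B /=; case Ax: (A x); rewrite avg_andb IH // size_rem_u !count_rem xu /= Ax.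
    by rewrite (negbTE (AC x Ax)) subn1 subn0 mul1r mul0r addr0 /X natrM mulrA.
  by case: (C x); rewrite /= ?subn0 ?subn1 ?mul0r ?mul1r ?add0r.
rewrite avg_cons // (eq_big_seq _ step) big_split /= -!mulr_suml !sumr_nat_of_bool.
change (count (fun x => ~~ (A x || C x)) u) with b.
have m_neq0 : m%:R != 0 :> R by rewrite pnatr_eq0 -lt0n.
have D_neq0 : D != 0 by rewrite /D pnatr_eq0 -lt0n ffact_gt0; lia.
rewrite -hypergeomS ffactnS natrD (natrM _ a) (natrM _ b) natrM /X /Y -/m -/D; field.
by rewrite m_neq0 D_neq0.
Qed.

End Averages.

Lemma mem_bigmax_seq (a : seq nat) : a != [::] -> \max_(y <- a) y \in a.
Proof.
elim: a => // x a IH _; rewrite big_cons inE.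
case: a IH => [|y a] IH; first by rewrite big_nil maxn0 eqxx.
by rewrite /maxn; case: ltnP => _; rewrite ?IH ?orbT ?eqxx.
Qed.

Lemma sum_nat_indicator_eq (R : nzRingType) m p i0 (F : nat -> R) : (m <= i0 < p)%N ->
  \sum_(m <= i < p) F i * (i == i0)%:R = F i0.
Proof.
move=> h; rewrite (bigD1_seq i0) ?mem_index_iota ?iota_uniq //= eqxx mulr1.
by rewrite big1_seq ?addr0 // => i /andP[/negPf -> _]; rewrite mulr0.
Qed.

Lemma bigmax_count_mem_sum (R : nzRingType) n k (a : seq nat) (F : nat -> nat -> R) :
  a != [::] -> {in a, forall x, 0 < x <= n}%N -> (forall r, count_mem r a <= k)%N ->
  let j0 := \max_(y <- a) y in
  F j0 (count_mem j0 a) = \sum_(1 <= j < n.+1) \sum_(1 <= l < k.+1)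
     F j l * ((count_mem j a == l) && (count (fun x => j < x)%N a == 0%N))%:R.
Proof.
move=> a_nil a_ranks a_mult j0; set l0 := count_mem j0 a.
have j0a : j0 \in a by apply: mem_bigmax_seq.
have le_j0 x : x \in a -> (x <= j0)%N by move=> xa; apply: leq_bigmax_seq.
have l0_gt0 : (0 < l0)%N by rewrite /l0 -has_count has_pred1.
have indicator j l : (0 < l)%N ->
    ((count_mem j a == l) && (count (fun x => j < x)%N a == 0%N)) = (j == j0) && (l == l0).
  move=> l_gt0; case: (ltngtP j j0) => [lt_j|gt_j|->].
  - have : (0 < count (fun x => j < x)%N a)%N by rewrite -has_count; apply/hasP; exists j0.
    by rewrite lt0n => /negbTE ->; rewrite andbF.
  - rewrite (eq_in_count (a1 := pred1 j) (a2 := pred0)) => [|x /le_j0 x_le /=].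
      by rewrite (count_pred0 a) eq_sym eqn0Ngt l_gt0.
    by apply/negbTE; rewrite neq_ltn (leq_ltn_trans x_le gt_j).
  - rewrite (eq_in_count (a1 := fun x => (j0 < x)%N) (a2 := pred0)) => [|x /le_j0].
      by rewrite count_pred0 eqxx andbT eq_sym.
    by rewrite ltnNge => ->.
rewrite (eq_big_nat _ _ (F2 := fun j =>
    (\sum_(1 <= l < k.+1) F j l * (l == l0)%:R) * (j == j0)%:R)); last first.
  move=> j _; rewrite big_distrl; apply: eq_big_nat => l /andP[l_gt0 _].
  by rewrite indicator // andbC -mulnb natrM mulrA.
have /andP[j0_gt0 j0_le] := a_ranks _ j0a.
by rewrite sum_nat_indicator_eq ?j0_gt0 //= sum_nat_indicator_eq ?l0_gt0 //= ltnS a_mult.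
Qed.

(* Given that the first M items have maximal rank j, attained l times, the
   remaining items of rank >= j are equally likely to come first among
   themselves; k - [j = n] l of these k (n - j + 1) - l items have rank n.  For
   j = n and l = k the ratio is 0 / 0, which is 0 as it should be. *)
Definition success_given_max n k j l : rat :=
  (k - (j == n) * l)%N%:R / (k * (n - j + 1) - l)%N%:R.

Lemma first_hit_success n k (a v : seq nat) :
  perm_eq (a ++ v) (rank_multiset n k) -> a != [::] ->
  let j0 := \max_(y <- a) y in
  (count (predI (fun x => j0 <= x)%N (pred1 n)) v)%:R / (count (fun x => j0 <= x)%N v)%:R
  = success_given_max n k j0 (count_mem j0 a).
Proof.
move=> av_perm a_nil j0; set l0 := count_mem j0 a.
have count_v P : count P v = (count P (rank_multiset n k) - count P a)%N.
  by rewrite -(permP av_perm) count_cat addKn.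
have a_ranks x : x \in a -> (0 < x <= n)%N.
  by move=> xa; apply: (@mem_rank_multiset n k); rewrite -(perm_mem av_perm) mem_cat xa.
have le_j0 x : x \in a -> (x <= j0)%N by move=> xa; apply: leq_bigmax_seq.
have /andP[j0_gt0 j0_le] := a_ranks _ (mem_bigmax_seq a_nil).
rewrite /success_given_max !count_v count_rank_multiset_ge ?j0_gt0 //.
have -> : count (fun x => j0 <= x)%N a = l0.
  by apply: eq_in_count => x /le_j0 x_le /=; rewrite eqn_leq x_le.
have n_gt0 : (0 < n)%N := leq_trans j0_gt0 j0_le.
congr (_%:R / _); congr (_ - _)%N.
  rewrite (eq_count (a2 := pred1 n)) => [|x /=]; last by case: eqP => [->|]; rewrite ?j0_le ?andbF.
  by rewrite count_mem_rank_multiset n_gt0 leqnn muln1.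
case: eqP => [j0n|/eqP j0n]; rewrite ?mul1n ?mul0n.
  by rewrite /l0 -j0n; apply: eq_count => x /=; case: eqP => [->|]; rewrite ?leqnn ?andbF.
apply/eqP; rewrite -leqn0 leqNgt -has_count; apply/hasPn => x /le_j0 x_le /=.
by apply: contra j0n => /andP[j0_x /eqP <-]; rewrite eqn_leq j0_x x_le.
Qed.

Lemma success_prob_avg n k M : (0 < M <= k * n)%N ->
  success_prob n k M = avg (rank_multiset n k) (fun s =>
    let a := take M s in success_given_max n k (\max_(y <- a) y) (count_mem (\max_(y <- a) y) a)).
Proof.
move=> /andP[M_gt0 M_le]; set u := rank_multiset n k.
have M_le_u : (M <= size u)%N by rewrite size_rank_multiset.
pose above a x := (\max_(y <- a) y <= x)%N.
transitivity (avg u (fun s => let a := take M s in let r := drop M s in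
                 (has (above a) r && (pred1 n) (nth 0%N r (find (above a) r)))%:R : rat)).
  rewrite /success_prob /avg -sumr_nat_of_bool; congr (_ / _); apply: eq_bigr => s _.
  by rewrite /strategy_select; case: has.
apply: (avg_prefix
  (f := fun a r => (has (above a) r && (pred1 n) (nth 0%N r (find (above a) r)))%:R)
  (phi := fun a => success_given_max n k (\max_(y <- a) y) (count_mem (\max_(y <- a) y) a)) M_le_u).
move=> a v av_perm a_size; rewrite avg_first_hit (first_hit_success av_perm) //.
by rewrite -size_eq0 a_size -lt0n.
Qed.

Lemma success_prob_sum n k M : (0 < M <= k * n)%N ->
  success_prob n k M = \sum_(1 <= j < n.+1) \sum_(1 <= l < k.+1)
    success_given_max n k j l * ((hypergeom M l k (k * j.-1))%:R / ((k * n) ^_ M)%:R).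
Proof.
move=> M_bounds; have /andP[M_gt0 M_le] := M_bounds.
set u := rank_multiset n k; have size_u : size u = (k * n)%N := size_rank_multiset n k.
rewrite success_prob_avg // (eq_avg (g := fun s => \sum_(1 <= j < n.+1) \sum_(1 <= l < k.+1)
    success_given_max n k j l *
    ((count_mem j (take M s) == l) && (count (fun x => j < x)%N (take M s) == 0%N))%:R)).
  rewrite avg_sum; apply: eq_big_nat => j /andP[j_gt0 j_lt]; rewrite avg_sum.
  apply: eq_bigr => l _.
  rewrite avgZ (@avg_prefix_count _ _ M (pred1 j) (fun x => j < x)%N) ?size_u //.
    rewrite count_mem_rank_multiset j_gt0 -ltnS j_lt muln1 -size_u.
    rewrite (@eq_count _ _ (fun x => x < j)%N) ?count_rank_multiset_lt ?j_gt0 ?(ltnW j_lt) //.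
    by move=> x /=; rewrite negb_or -leqNgt ltn_neqAle.
  by move=> x /eqP ->; rewrite ltnn.
move=> s; rewrite mem_permutations => s_perm.
have mem_s x : x \in take M s -> x \in u by move/mem_take; rewrite (perm_mem s_perm).
apply: bigmax_count_mem_sum.
- by rewrite -size_eq0 size_takel ?(perm_size s_perm) ?size_u // -lt0n.
- by move=> x /mem_s /mem_rank_multiset.
- move=> r; apply: (@leq_trans (count_mem r s)).
    by rewrite -[X in (_ <= count _ X)%N](cat_take_drop M) count_cat leq_addr.
  by rewrite (permP s_perm) count_mem_rank_multiset; case: (_ && _); rewrite ?muln1 ?muln0.
Qed.

Lemma success_given_max_top n k l : (l < k)%N -> success_given_max n k n l = 1.
Proof.
move=> lk; rewrite /success_given_max eqxx mul1n subnn add0n muln1.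
by rewrite divff // pnatr_eq0 subn_eq0 -ltnNge.
Qed.

Lemma success_given_max_all_top n k : success_given_max n k n k = 0.
Proof. by rewrite /success_given_max eqxx mul1n subnn mul0r. Qed.

Lemma success_given_max_lt n k j l : (j < n)%N -> (l <= k)%N ->
  success_given_max n k j l = k%:R / ((k * (n - j + 1))%:R - l%:R).
Proof.
move=> jn lk; rewrite /success_given_max ltn_eqF // mul0n subn0 natrB //.
by rewrite (leq_trans lk) // leq_pmulr // addn1.
Qed.

Theorem proposition1 (n k M : nat) :
  (2 <= k)%N -> (1 <= n)%N -> (1 <= M)%N -> (M <= k * n - 1)%N ->
  success_prob n k M =
    \sum_(1 <= l < k)
      (('C(M, l) * k ^_ l * (k * (n - 1)) ^_ (M - l))%N%:R / ((k * n) ^_ M)%N%:R)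
  + k%:R * \sum_(1 <= j < n) \sum_(1 <= l < k.+1)
      (('C(M, l) * k ^_ l * (k * (j - 1)) ^_ (M - l))%N%:R / ((k * n) ^_ M)%N%:R
       * ((k * (n - j + 1))%N%:R - l%:R)^-1).
Proof.
move=> k_ge2 n_gt0 M_gt0 M_le.
rewrite success_prob_sum; last by lia.
rewrite big_nat_recr //= addrC; congr (_ + _).
  rewrite big_nat_recr /=; last by lia.
  rewrite success_given_max_all_top mul0r addr0; apply: eq_big_nat => l /andP[_ lk].
  by rewrite success_given_max_top // mul1r subn1.
rewrite big_distrr; apply: eq_big_nat => j /andP[_ jn].
rewrite big_distrr; apply: eq_big_nat => l /andP[_ lk].
by rewrite success_given_max_lt // subn1 mulrAC -mulrA.
Qed.
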